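(* Let $n$ be a natural number and $A$ a pointed $(n+1)$-truncated type. Then the total space of the universal pointed $n$-covering of $A$ is contractible.
   Context: Work in homotopy type theory. A pointed $n$-covering of a pointed type $A$ with pointing map $a:1\to A$ is a factorization $a=p\circ i$ with $i:1\to B$ and $p:B\to A$ having $n$-type fibers; a morphism of pointed $n$-coverings is a map between total spaces commuting with the projections and the points; the universal pointed $n$-covering is the one admitting a unique morphism to every pointed $n$-covering. *)

Definition IsContr (X : Type) : Type := { x : X & forall y : X, x = y }.

(* Truncation levels shifted by 2: [IsTruncM2 k X] means X is a (k-2)-type. *)
Fixpoint IsTruncM2 (k : nat) (X : Type) : Type :=
  match k with
  | O => IsContr X
  | S k' => forall x y : X, IsTruncM2 k' (x = y)
  end.

Definition IsNType (n : nat) (X : Type) : Type := IsTruncM2 (S (S n)) X.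

Definition hfiber {B A : Type} (p : B -> A) (y : A) : Type :=
  { b : B & p b = y }.

(* A pointed n-covering of the pointed type (A, a): a factorization of the
   pointing map a : 1 -> A as  a = p o i  with i : 1 -> B (a point of B) and
   p : B -> A having n-type fibers. *)
Record PtdCov (n : nat) (A : Type) (a : A) : Type := {
  cov_tot : Type;
  cov_pt : cov_tot;
  cov_proj : cov_tot -> A;
  cov_pt_eq : cov_proj cov_pt = a;
  cov_fib : forall y : A, IsNType n (hfiber cov_proj y)
}.

Arguments cov_tot {n A a} _.
Arguments cov_pt {n A a} _.
Arguments cov_proj {n A a} _ _.
Arguments cov_pt_eq {n A a} _.
Arguments cov_fib {n A a} _ _.

Definition CovMor {n : nat} {A : Type} {a : A} (C D : PtdCov n A a) : Type :=
  { f : cov_tot C -> cov_tot D &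
  { H : forall b, cov_proj D (f b) = cov_proj C b &
  { K : f (cov_pt C) = cov_pt D &
    eq_trans (f_equal (cov_proj D) K) (cov_pt_eq D)
    = eq_trans (H (cov_pt C)) (cov_pt_eq C) } } }.

Definition IsUniversalCov {n : nat} {A : Type} {a : A} (U : PtdCov n A a) : Type :=
  forall C : PtdCov n A a, IsContr (CovMor U C).


(* The pointing map factors through the trivial covering [unit -> A], whose
   fibers [a = y] are n-types because A is an (n+1)-type.  A morphism from U
   to it makes the projection of U coherently homotopic to the constant map
   at [a]; that homotopy turns the constant map at the base point of U into
   an endomorphism of U.  Universality identifies this endomorphism with the
   identity, so every point of U equals the base point. *)

Lemma trunc_retract (k : nat) : forall (X Y : Type) (r : X -> Y) (s : Y -> X),
  (forall y, r (s y) = y) -> IsTruncM2 k X -> IsTruncM2 k Y.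
Proof.
  induction k as [|k IH]; intros X Y r s rs HX; simpl in *.
  - destruct HX as [x0 c]. exists (r x0). intro y.
    exact (eq_trans (f_equal r (c (s y))) (rs y)).
  - intros y1 y2.
    apply (IH (s y1 = s y2) (y1 = y2)
      (fun q => eq_trans (eq_sym (rs y1)) (eq_trans (f_equal r q) (rs y2)))
      (fun p => f_equal s p)).
    + intro p. destruct p. simpl. destruct (rs y1). reflexivity.
    + apply HX.
Qed.

Lemma path_contr {X : Type} : IsContr X -> forall x y : X, x = y.
Proof.
  intros [c Hc] x y. exact (eq_trans (eq_sym (Hc x)) (Hc y)).
Qed.

Lemma f_equal_const {X Y : Type} (c : Y) (x y : X) (p : x = y) :
  f_equal (fun _ => c) p = eq_refl.
Proof. destruct p. reflexivity. Qed.

Lemma trunc_hfiber_const {A : Type} (k : nat) (a y : A) :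
  IsTruncM2 k (a = y) -> IsTruncM2 k (hfiber (fun _ : unit => a) y).
Proof.
  apply (trunc_retract k _ _ (fun p => existT _ tt p)
    (fun w : hfiber (fun _ : unit => a) y => projT2 w)).
  intros [[] p]. reflexivity.
Qed.

Definition unit_cov (n : nat) (A : Type) (a : A) (HA : IsNType (S n) A) :
  PtdCov n A a :=
  {| cov_tot := unit; cov_pt := tt; cov_proj := fun _ => a;
     cov_pt_eq := eq_refl;
     cov_fib := fun y => trunc_hfiber_const (S (S n)) a y (HA a y) |}.

Definition id_mor {n : nat} {A : Type} {a : A} (C : PtdCov n A a) : CovMor C C :=
  existT _ (fun b => b) (existT _ (fun _ => eq_refl) (existT _ eq_refl eq_refl)).

Section ConstantEndomorphism.

Variables (n : nat) (A : Type) (a : A) (C : PtdCov n A a).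

Definition ConstProjHomotopy : Type :=
  { h : forall b, a = cov_proj C b &
    eq_trans (h (cov_pt C)) (cov_pt_eq C) = eq_refl }.

Lemma mor_unit_cov_homotopy (HA : IsNType (S n) A) :
  CovMor C (unit_cov n A a HA) -> ConstProjHomotopy.
Proof.
  intros [g [h [K coh]]]. exists h. simpl in coh.
  rewrite f_equal_const in coh. exact (eq_sym coh).
Qed.

Definition const_endo (h : ConstProjHomotopy) : CovMor C C.
Proof.
  exists (fun _ => cov_pt C), (fun b => eq_trans (cov_pt_eq C) (projT1 h b)), eq_refl.
  rewrite <- eq_trans_assoc, (projT2 h). apply eq_trans_refl_l.
Defined.

End ConstantEndomorphism.

Theorem mainTheorem9 (n : nat) (A : Type) (a : A)
  (HA : IsNType (S n) A)
  (U : PtdCov n A a) (HU : IsUniversalCov U) :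
  IsContr (cov_tot U).
Proof.
  destruct (HU (unit_cov n A a HA)) as [m _].
  pose (h := mor_unit_cov_homotopy n A a U HA m).
  pose (e := path_contr (HU U) (const_endo n A a U h) (id_mor U)).
  exists (cov_pt U). intro b.
  exact (f_equal (fun f : CovMor U U => projT1 f b) e).
Qed.
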